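(* Let $\mathcal M=(M,\le,{}^\perp)$ be a complete orthomodular lattice, $L$ an involutive submonoid of $\mathbf{Lin}(\mathcal M)$ containing all Sasaki projections $\pi_m$ ($m\in M$), and $A\in\mathscr P(L)$. Then in $\mathscr P(L)$ one has ${\sim}{\sim}A=\{\pi_{\bigvee_{a\in A}a(1)}\}$.
   Context: For an orthomodular lattice and $m\in M$, $\pi_m(x)=m\wedge(m^\perp\vee x)$. A map $f\colon M\to M$ is linear if there is $g\colon M\to M$ (unique, written $f^*$) with $f(x)\le y^\perp\iff x\le g(y)^\perp$ for all $x,y\in M$. $\mathbf{Lin}(\mathcal M)$ is the set of linear maps, an involutive monoid under composition, $f\mapsto f^*$ and $\mathrm{id}_M$; each $\pi_m\in\mathbf{Lin}(\mathcal M)$ and $\pi_m^*=\pi_m$. For such $L$, $\mathscr P(L)$ denotes the powerset of $L$ with union, $A\odot B=\{a\circ b\mid a\in A,b\in B\}$, $A^*=\{a^*\mid a\in A\}$, unit $\{\mathrm{id}_M\}$ and ${\sim}A=\{\pi_{(\bigvee_{a\in A}a(1))^\perp}\}$; $1$ is the top of $M$. *)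

Set Implicit Arguments.

Record COML := {
  car :> Type;
  le : car -> car -> Prop;
  perp : car -> car;
  sup : (car -> Prop) -> car;
  le_refl : forall x, le x x;
  le_trans : forall x y z, le x y -> le y z -> le x z;
  le_antisym : forall x y, le x y -> le y x -> x = y;
  sup_ub : forall (S : car -> Prop) x, S x -> le x (sup S);
  sup_least : forall (S : car -> Prop) y, (forall x, S x -> le x y) -> le (sup S) y;
  perp_invol : forall x, perp (perp x) = x;
  perp_anti : forall x y, le x y -> le (perp y) (perp x);
  perp_compl : forall x, sup (fun z => z = x \/ z = perp x) = sup (fun _ => True);
  orthomodular : forall x y, le x y ->
    y = sup (fun z => z = x \/
                 z = perp (sup (fun w => w = perp y \/ w = perp (perp x))))
}.

Arguments le {c} _ _.
Arguments perp {c} _.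
Arguments sup {c} _.

Section Ops.
Variable M : COML.
Definition join (x y : M) : M := sup (fun z => z = x \/ z = y).
Definition meet (x y : M) : M := sup (fun z => le z x /\ le z y).
Definition top : M := sup (fun _ => True).

Definition sasaki (m : M) (x : M) : M := meet m (join (perp m) x).

Definition adjoint_of (f g : M -> M) : Prop :=
  forall x y, le (f x) (perp y) <-> le x (perp (g y)).
Definition linear (f : M -> M) : Prop := exists g, adjoint_of f g.

Definition inv_submonoid_sasaki (L : (M -> M) -> Prop) : Prop :=
  (forall f, L f -> linear f) /\
  L (fun x => x) /\
  (forall f g, L f -> L g -> L (fun x => f (g x))) /\
  (forall f, L f -> exists g, L g /\ adjoint_of f g) /\
  (forall m, L (sasaki m)).

Definition supim (A : (M -> M) -> Prop) : M :=
  sup (fun y => exists a, A a /\ y = a top).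
Definition pneg (A : (M -> M) -> Prop) : (M -> M) -> Prop :=
  fun f => f = sasaki (perp (supim A)).
End Ops.
Arguments sasaki {M} _ _.
Arguments inv_submonoid_sasaki {M} _.
Arguments supim {M} _.
Arguments pneg {M} _ _.
Arguments adjoint_of {M} _ _.
Arguments linear {M} _.

(* Since pi_m(1) = m, the join of the values at 1 over the singleton
   ~A = {pi_(s^perp)}, s := \/_(a in A) a(1), is s^perp itself; hence
   ~~A = {pi_(s^perp perp)} = {pi_s}. *)

Section Lattice.
Variable M : COML.

Lemma le_top (x : M) : le x (top M).
Proof. apply sup_ub. exact I. Qed.

Lemma join_top (x : M) : join M x (top M) = top M.
Proof.
  apply le_antisym.
  - apply sup_least. intros z _. apply le_top.
  - apply sup_ub. now right.
Qed.

Lemma meet_top (x : M) : meet M x (top M) = x.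
Proof.
  apply le_antisym.
  - apply sup_least. now intros z [Hzx _].
  - apply sup_ub. split; [apply le_refl | apply le_top].
Qed.

Lemma sasaki_top (m : M) : sasaki m (top M) = m.
Proof. unfold sasaki. now rewrite join_top, meet_top. Qed.

Lemma supim_singleton (g : M -> M) : supim (fun f => f = g) = g (top M).
Proof.
  apply le_antisym.
  - apply sup_least. intros y [a [-> ->]]. apply le_refl.
  - apply sup_ub. now exists g.
Qed.

Lemma supim_pneg (A : (M -> M) -> Prop) : supim (pneg A) = perp (supim A).
Proof. unfold pneg. now rewrite supim_singleton, sasaki_top. Qed.

End Lattice.

Theorem lemma3p8 (M : COML) (L : (M -> M) -> Prop) (A : (M -> M) -> Prop) :
  inv_submonoid_sasaki L ->
  (forall a, A a -> L a) ->
  pneg (pneg A) = (fun f => f = sasaki (supim A)).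
Proof.
  intros _ _.
  unfold pneg at 1.
  now rewrite supim_pneg, perp_invol.
Qed.
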